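(* $\chi_i'(S_{C_5}^1)=3$ and $\chi_i'(S_{C_5}^n)=4$ for every integer $n\ge 2$, where $C_5$ is the cycle on $5$ vertices.
   Context: For a graph $H$ with at least one edge, an injective edge $k$-coloring is a map $c:E(H)\to\{1,\dots,k\}$ such that whenever $e_1=xy$, $e_2=yz$, $e_3=zu$ are edges of $H$ with $x,y,z$ distinct and $u\notin\{y,z\}$ (the case $u=x$ being allowed), we have $c(e_1)\ne c(e_3)$. The injective chromatic index $\chi_i'(H)$ is the least $k$ for which such a coloring exists. For a graph $G$ and positive integer $n$, the generalized Sierpiński graph $S_G^n$ has vertex set $V(G)^n$, and $(u_1,\dots,u_n)$, $(v_1,\dots,v_n)$ are adjacent if and only if there is $d\in\{1,\dots,n\}$ with $u_i=v_i$ for $i<d$, $u_dv_d\in E(G)$, and $u_i=v_d$, $v_i=u_d$ for all $i>d$. *)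

From mathcomp Require Import all_boot.
Set Implicit Arguments. Unset Strict Implicit. Unset Printing Implicit Defensive.

(* A (simple) graph is given by a finite vertex type V and a symmetric,
   irreflexive adjacency relation e : rel V; its edges are the 2-sets
   [set x; y] with e x y. *)

(* An injective edge k-coloring: colors 'I_k (i.e. k colors); the color of
   the edge xy is c [set x; y] (only values on edges matter). *)
Definition inj_edge_coloring (V : finType) (e : rel V) (k : nat)
    (c : {set V} -> 'I_k) : Prop :=
  forall x y z u : V,
    e x y -> e y z -> e z u ->
    x != y -> y != z -> x != z ->
    u != y -> u != z ->
    c [set x; y] != c [set z; u].

Definition inj_edge_colorable (V : finType) (e : rel V) (k : nat) : Prop :=
  exists c : {set V} -> 'I_k, inj_edge_coloring e c.

Definition inj_chromatic_index_is (V : finType) (e : rel V) (k : nat) : Prop :=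
  inj_edge_colorable e k /\ forall j, j < k -> ~ inj_edge_colorable e j.

(* Generalized Sierpinski graph S_G^n: vertices are words of length n over V,
   coordinates indexed 0..n-1 (coordinate i here is coordinate i+1 of the paper). *)
Definition sierp_adj (V : finType) (e : rel V) (n : nat) : rel {ffun 'I_n -> V} :=
  fun u v => [exists d : 'I_n,
    [&& [forall i : 'I_n, (i < d) ==> (u i == v i)],
        e (u d) (v d) &
        [forall i : 'I_n, (d < i) ==> ((u i == v d) && (v i == u d))]]].

Definition C5 : rel 'I_5 :=
  fun x y => ((x.+1 %% 5) == y) || ((y.+1 %% 5) == x).

Arguments sierp_adj {V} e n : rename.

From mathcomp Require Import all_boot zmodp zify.
Set Implicit Arguments. Unset Strict Implicit. Unset Printing Implicit Defensive.

(* S^1 is C_5, whose edge {i, i+1} can be coloured i/2 rounded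
   down.  For n >= 2, sending a word to its last two letters maps S^n
   homomorphically onto S^2 enlarged by the edges (a, a) ~ (b, b).  A vertex has
   at most one edge that changes a letter before the last one, so on every
   2-path x - y - z of S^n with x <> z the images of x and z differ and one of
   the two edges only changes the last letter.  Hence a 4-colouring of the
   25-vertex image graph that separates the ends of the 3-edge walks whose both
   2-subpaths contain such a "marked" edge pulls back to an injective colouring
   of S^n.  C_5 has no injective 2-colouring and S^2 no injective
   3-colouring (exhaustive backtracking search), and S^2 embeds into S^n by
   padding words with a constant prefix. *)

Section InjectiveEdgeColorings.
Variables (V : finType) (e : rel V).

Lemma inj_edge_colorable_leq k k' :
  k <= k' -> inj_edge_colorable e k -> inj_edge_colorable e k'.
Proof.
move=> le_kk' [c col]; exists (widen_ord le_kk' \o c).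
move=> x y z u exy eyz ezu nxy nyz nxz nuy nuz.
by rewrite -val_eqE /= val_eqE; apply: col.
Qed.

Lemma inj_chromatic_index_isS k :
  inj_edge_colorable e k.+1 -> ~ inj_edge_colorable e k ->
  inj_chromatic_index_is e k.+1.
Proof. by move=> colk nocol; split=> // j /ltnSE le_jk /(inj_edge_colorable_leq le_jk). Qed.

Lemma inj_edge_colorable_hom (W : finType) (h : rel W) (f : V -> W) k :
  injective f -> {homo f : x y / e x y >-> h x y} ->
  inj_edge_colorable h k -> inj_edge_colorable e k.
Proof.
move=> f_inj f_hom [c col]; exists (fun S : {set V} => c (f @: S)).
move=> x y z u exy eyz ezu nxy nyz nxz nuy nuz.
by rewrite !imsetU1 !imset_set1; apply: col; rewrite ?(inj_eq f_inj) //; apply: f_hom.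
Qed.

Definition inj_conflict (x y z u : V) : bool :=
  [&& e x y, e y z, e z u, x != y, y != z, x != z, u != y & u != z].

Definition edge_conflict (p q : V * V) : bool :=
  [|| inj_conflict p.1 p.2 q.1 q.2, inj_conflict p.2 p.1 q.1 q.2,
      inj_conflict p.1 p.2 q.2 q.1 | inj_conflict p.2 p.1 q.2 q.1].

Definition edge_color k (c : {set V} -> 'I_k) (p : V * V) : nat := c [set p.1; p.2].

Lemma edge_conflict_color k (c : {set V} -> 'I_k) p q :
  inj_edge_coloring e c -> edge_conflict p q -> edge_color c p != edge_color c q.
Proof.
move=> col; have sep x y z u : inj_conflict x y z u -> c [set x; y] != c [set z; u].
  by case/and4P=> exy eyz ezu /and5P[nxy nyz nxz nuy nuz]; apply: col.
rewrite /edge_color val_eqE; case: p q => [x y] [z u] /=.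
by case/or4P=> /sep; rewrite ?(setUC [set y]) ?(setUC [set u]).
Qed.

Definition edges_in (s : seq V) : seq (V * V) :=
  [seq p <- [seq (x, y) | x <- s, y <- s] | e p.1 p.2 && (index p.1 s < index p.2 s)].

End InjectiveEdgeColorings.

Section ColoringSearch.
Variables (T : Type) (r : rel T) (k : nat).

Fixpoint extendable (ts : seq T) (colored : seq (T * nat)) : bool :=
  if ts is t :: ts' then
    has (fun c => all (fun sc => r sc.1 t ==> (sc.2 != c)) colored &&
                  extendable ts' ((t, c) :: colored)) (iota 0 k)
  else true.

Lemma extendable_proper (col : T -> nat) :
  (forall t, col t < k) -> (forall s t, r s t -> col s != col t) ->
  forall ts colored, all (fun sc => sc.2 == col sc.1) colored -> extendable ts colored.
Proof.
move=> col_lt col_r; elim=> [|t ts IH] colored col_colored //=.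
apply/hasP; exists (col t); first by rewrite mem_iota col_lt.
apply/andP; split; last by apply: IH; rewrite /= eqxx.
by apply: sub_all col_colored => -[s c] /eqP /= ->; apply/implyP/col_r.
Qed.

End ColoringSearch.

Lemma inj_edge_colorable_extendable (V : finType) (e : rel V) k ps :
  inj_edge_colorable e k -> extendable (edge_conflict e) k ps [::].
Proof.
case=> c col; apply: (@extendable_proper _ _ _ (edge_color c)) => // [p|p q].
  exact: ltn_ord.
exact: edge_conflict_color.
Qed.

Section MarkedColorings.
Variables (W : eqType) (h marked : rel W) (k : nat) (g : W -> W -> 'I_k).

Definition marked_inj_coloring : Prop :=
  (forall a b, h a b -> g b a = g a b) /\
  (forall a b c d, h a b -> h b c -> h c d -> a != c -> b != d ->
     marked a b || marked b c -> marked b c || marked c d -> g a b != g c d).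

Definition marked_inj_coloringb (s : seq W) : bool :=
  all (fun a => all (fun b => h a b ==> (g b a == g a b) &&
    all (fun c => h b c ==> all (fun d => h c d ==>
      ([&& a != c, b != d, marked a b || marked b c & marked b c || marked c d]
       ==> (g a b != g c d))) s) s) s) s.

Lemma marked_inj_coloringP s :
  (forall a, a \in s) -> marked_inj_coloringb s -> marked_inj_coloring.
Proof.
move=> s_full /allP chk; split=> [a b hab|a b c d hab hbc hcd nac nbd mabc mbcd].
  by move: (allP (chk a (s_full a)) b (s_full b)); rewrite hab => /andP[/eqP].
move: (allP (chk a (s_full a)) b (s_full b)); rewrite hab => /andP[_ /allP/(_ c (s_full c))].
by rewrite hbc => /allP/(_ d (s_full d)); rewrite hcd nac nbd mabc mbcd.
Qed.

End MarkedColorings.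

Section MarkedPullback.
Variables (V : finType) (e : rel V).

Definition set2_color k (g : V -> V -> 'I_k.+1) (S : {set V}) : 'I_k.+1 :=
  if [pick p : V * V | S == [set p.1; p.2]] is Some p then g p.1 p.2 else ord0.

Lemma set2_colorE k (g : V -> V -> 'I_k.+1) x y :
  g y x = g x y -> set2_color g [set x; y] = g x y.
Proof.
move=> gyx; rewrite /set2_color; case: pickP => [[a b] /= /eqP Exy|]; last first.
  by move=> /(_ (x, y)); rewrite eqxx.
have ha : a \in [set x; y] by rewrite Exy set21.
have hb : b \in [set x; y] by rewrite Exy set22.
have hx : x \in [set a; b] by rewrite -Exy set21.
have hy : y \in [set a; b] by rewrite -Exy set22.
by case/set2P: ha hx hy => -> hx hy; case/set2P: hb hx hy => -> hx hy; rewrite // -?gyx;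
  [case/set2P: hy => -> | case/set2P: hx => ->].
Qed.

Lemma inj_edge_colorable_marked_pullback (W : eqType) (h marked : rel W) (f : V -> W)
    k (g : W -> W -> 'I_k.+1) :
  {homo f : x y / e x y >-> h x y} ->
  (forall x y z, e x y -> e y z -> x != z ->
     (f x != f z) && (marked (f x) (f y) || marked (f y) (f z))) ->
  marked_inj_coloring h marked g -> inj_edge_colorable e k.+1.
Proof.
move=> f_hom f_path [g_sym g_sep]; exists (set2_color (fun x y => g (f x) (f y))).
move=> x y z u exy eyz ezu _ _ nxz nuy _.
rewrite !set2_colorE ?(g_sym _ _ (f_hom _ _ exy)) ?(g_sym _ _ (f_hom _ _ ezu)) //.
have /andP[fxz mxyz] := f_path _ _ _ exy eyz nxz.
have nyu : y != u by rewrite eq_sym.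
have /andP[fyu myzu] := f_path _ _ _ eyz ezu nyu.
by apply: g_sep; rewrite ?f_hom.
Qed.

End MarkedPullback.

Section SierpinskiGraphs.
Variables (V : finType) (e : rel V).
Local Notation word n := {ffun 'I_n -> V}.

(* [sierp2] is [S_G^2] on pairs of letters; [last2_graph] adds the edges
   (a, a) ~ (b, b), the images of the edges of [S_G^n] at positions < n - 1. *)
Definition sierp2 : rel (V * V) := fun p q =>
  ((p.1 == q.1) && e p.2 q.2) || [&& p.1 == q.2, p.2 == q.1 & e p.1 q.1].

Definition last2_graph : rel (V * V) := fun p q =>
  sierp2 p q || [&& p.1 == p.2, q.1 == q.2 & e p.1 q.1].

Definition sierp_edge_at n (u v : word n) (d : 'I_n) : Prop :=
  [/\ forall i : 'I_n, i < d -> u i = v i, e (u d) (v d) &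
      forall i : 'I_n, d < i -> u i = v d /\ v i = u d].

Lemma sierp_adjP n (u v : word n) :
  reflect (exists d, sierp_edge_at u v d) (sierp_adj e n u v).
Proof.
apply: (iffP existsP) => -[d].
- case/and3P=> /forallP pre edv /forallP suf; exists d; split=> // i lt_id.
  + by apply/eqP; move: (pre i); rewrite lt_id.
  + by move: (suf i); rewrite lt_id => /andP[/eqP -> /eqP ->].
- case=> pre edv suf; exists d; apply/and3P; split=> //.
  + by apply/forallP=> i; apply/implyP=> lt_id; rewrite pre.
  + by apply/forallP=> i; apply/implyP=> lt_di; case: (suf i lt_di) => -> ->; rewrite !eqxx.
Qed.

Lemma sierp_adj1 (u v : word 1) : sierp_adj e 1 u v = e (u ord0) (v ord0).
Proof.
apply/sierp_adjP/idP => [[d [_ + _]]|euv]; first by rewrite (ord1 d).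
by exists ord0; split=> // i; rewrite (ord1 i).
Qed.

Lemma sierp_edge_at_inj n (u v v' : word n) d :
  sierp_edge_at u v d -> sierp_edge_at u v' d -> v d = v' d -> v = v'.
Proof.
move=> [pre _ suf] [pre' _ suf'] Evd; apply/ffunP=> i.
case: (ltngtP i d) => [lt_id|lt_di|/val_inj -> //].
- by rewrite -pre // pre'.
- by case: (suf i lt_di) => _ ->; case: (suf' i lt_di) => _ ->.
Qed.

Hypotheses (e_sym : symmetric e) (e_irr : irreflexive e).

Lemma sierp_adj_sym n : symmetric (sierp_adj e n).
Proof.
suff adj_sym u v : sierp_adj e n u v -> sierp_adj e n v u.
  by move=> u v; apply/idP/idP; apply: adj_sym.
case/sierp_adjP=> d [pre edv suf]; apply/sierp_adjP; exists d; split.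
- by move=> i /pre.
- by rewrite e_sym.
- by move=> i /suf[-> ->].
Qed.

Lemma sierp_edge_at_low_uniq n (u v v' : word n) d d' (i : 'I_n) :
  sierp_edge_at u v d -> sierp_edge_at u v' d' -> d < i -> d' < i -> v = v'.
Proof.
wlog le_dd' : d d' v v' / d <= d'.
  move=> wlog_le uv uv' lt_di lt_d'i; case: (leqP d d') => [le|/ltnW le].
    exact: wlog_le uv uv' lt_di lt_d'i.
  by apply/esym; apply: wlog_le uv' uv lt_d'i lt_di.
move=> uv uv' lt_di lt_d'i; have [_ _ suf] := uv; have [_ ev' suf'] := uv'.
case: (ltngtP d d') le_dd' => // [lt_dd'|/val_inj Edd'] _.
  case: (suf _ lt_dd') => ud' _; case: (suf _ lt_di) => ui _.
  by case: (suf' _ lt_d'i) => ui' _; move: ev'; rewrite ud' -ui ui' e_irr.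
subst d'; apply: (sierp_edge_at_inj uv uv').
by case: (suf _ lt_di) => <- _; case: (suf' _ lt_di) => <-.
Qed.

Section LastTwoLetters.
Variable m : nat.
Local Notation pen := (inord m : 'I_m.+2).

Definition last2 (w : word m.+2) : V * V := (w pen, w ord_max).

Definition pad (v0 : V) (p : V * V) : word m.+2 :=
  [ffun i : 'I_m.+2 => if i < m then v0 else if i == m :> nat then p.1 else p.2].

Lemma val_pen : pen = m :> nat.
Proof. exact: inordK. Qed.

Lemma ltn_ord_max (d : 'I_m.+2) : d != ord_max -> d < @ord_max m.+1.
Proof. by move=> nd; rewrite ltn_neqAle -ltnS ltn_ord andbT -val_eqE in nd *. Qed.

Lemma neq_of_edge a b : e a b -> a != b.
Proof. by apply: contraTneq => ->; rewrite e_irr. Qed.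

Lemma last_edge_pen (u v : word m.+2) : sierp_edge_at u v ord_max -> u pen = v pen.
Proof. by case=> pre _ _; apply: pre; rewrite val_pen. Qed.

Lemma low_edge_pen (u v : word m.+2) d :
  sierp_edge_at u v d -> d != ord_max -> u pen != v pen.
Proof.
case=> _ euv suf /ltn_ord_max lt_dmax; have [Ed|nd] := eqVneq d pen.
  by subst d; exact: neq_of_edge.
have lt_dpen : d < pen by move: lt_dmax nd; rewrite -val_eqE /= val_pen; lia.
by case: (suf _ lt_dpen) => -> ->; rewrite eq_sym neq_of_edge.
Qed.

Lemma last2_hom : {homo last2 : x y / sierp_adj e m.+2 x y >-> last2_graph x y}.
Proof.
move=> x y /sierp_adjP[d [pre exy suf]]; rewrite /last2_graph /sierp2 /=.
have [Ed|nd] := eqVneq d ord_max.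
  by subst d; rewrite pre ?val_pen // eqxx exy.
have [Ed|nd'] := eqVneq d pen.
  by subst d; case: (suf ord_max) => [|-> ->]; rewrite ?val_pen // !eqxx exy orbT.
have lt_dpen : d < pen.
  by move: (ltn_ord_max nd) nd'; rewrite -val_eqE /= val_pen; lia.
have lt_dmax := ltn_ord_max nd.
by case: (suf _ lt_dpen) => -> ->; case: (suf _ lt_dmax) => -> ->; rewrite !eqxx e_sym exy !orbT.
Qed.

Lemma last2_neq (y x z : word m.+2) d :
  sierp_edge_at y x ord_max -> sierp_edge_at y z d -> x != z -> last2 x != last2 z.
Proof.
move=> yx yz; have [Ed|nd] := eqVneq d ord_max.
  subst d; apply: contra => /eqP[_ Emax]; apply/eqP; exact: sierp_edge_at_inj yx yz Emax.
move=> _; rewrite /last2 xpair_eqE -(last_edge_pen yx) negb_and.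
by rewrite (low_edge_pen yz nd).
Qed.

Lemma last2_path (x y z : word m.+2) :
  sierp_adj e m.+2 x y -> sierp_adj e m.+2 y z -> x != z ->
  (last2 x != last2 z) && (((last2 x).1 == (last2 y).1) || ((last2 y).1 == (last2 z).1)).
Proof.
rewrite sierp_adj_sym => /sierp_adjP[d1 yx] /sierp_adjP[d2 yz] nxz.
have [Ed1|nd1] := eqVneq d1 ord_max.
  by subst d1; rewrite (last2_neq yx yz nxz) /= (last_edge_pen yx) eqxx.
have [Ed2|nd2] := eqVneq d2 ord_max.
  subst d2; rewrite eq_sym (last2_neq yz yx) 1?eq_sym //=.
  by rewrite (last_edge_pen yz) eqxx orbT.
by case/eqP: nxz; apply: sierp_edge_at_low_uniq yx yz (ltn_ord_max nd1) (ltn_ord_max nd2).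
Qed.

Lemma last2_pad v0 p : last2 (pad v0 p) = p.
Proof. by rewrite /last2 !ffunE val_pen ltnn eqxx /= ltnNge leqnSn eqn_leq ltnn; case: p. Qed.

Lemma pad_hom v0 : {homo pad v0 : p q / sierp2 p q >-> sierp_adj e m.+2 p q}.
Proof.
move=> [a b] [c d] /orP[/andP[/= /eqP <- ebd]|/and3P[/= /eqP Ead /eqP Ebc eac]]; apply/sierp_adjP.
  exists ord_max; split.
  - move=> i lt_imax; rewrite !ffunE /=; case: ifP => // /negbT ge_im.
    by have -> : i == m :> nat by move: lt_imax ge_im => /=; lia.
  - by rewrite !ffunE /= ltnNge leqnSn eqn_leq ltnn.
  - by move=> i; rewrite ltnNge -ltnS ltn_ord.
exists pen; split.
- by move=> i; rewrite val_pen !ffunE => ->.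
- by rewrite !ffunE val_pen ltnn eqxx.
- move=> i; rewrite !ffunE val_pen ltnn eqxx /= => lt_mi.
  have [-> ->] : (i < m = false) /\ (i == m :> nat) = false by split; lia.
  by rewrite Ead Ebc.
Qed.

End LastTwoLetters.

End SierpinskiGraphs.

Lemma C5_sym : symmetric C5.
Proof. by move=> a b; rewrite /C5 orbC. Qed.

Lemma C5_irr : irreflexive C5.
Proof. by case=> [[|[|[|[|[|a]]]]] lt_a5]. Qed.

Definition cyc_low (a b : 'I_5) : 'I_5 := if ordS a == b then a else b.

Definition C5_color (a b : 'I_5) : 'I_3 := inZp (cyc_low a b)./2.

(* In copy a, the edge (a, i) ~ (a, i + 1) gets colour [copy_colors`_a`_i]; the
   edges (i, i) ~ (i + 1, i + 1) get [diag_colors`_i] and (i, i + 1) ~ (i + 1, i)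
   colour 3. *)
Definition copy_colors : seq (seq nat) :=
  [:: [:: 0; 1; 1; 3; 0]; [:: 2; 1; 1; 0; 2]; [:: 3; 0; 0; 2; 1];
      [:: 0; 3; 1; 1; 0]; [:: 1; 0; 3; 2; 2]].

Definition diag_colors : seq nat := [:: 0; 0; 1; 2; 0].

Definition last2_color (p q : 'I_5 * 'I_5) : 'I_4 :=
  inZp (if p.1 == q.1 then nth 0 (nth [::] copy_colors p.1) (cyc_low p.2 q.2)
         else if p.1 == p.2 then nth 0 diag_colors (cyc_low p.1 q.1) else 3).

Definition letters5 : seq 'I_5 := traject (@ordS 5) ord0 5.

Lemma mem_letters5 a : a \in letters5.
Proof. by case: a => [[|[|[|[|[|a]]]]] lt_a5]. Qed.

Definition pairs5 : seq ('I_5 * 'I_5) := [seq (a, b) | a <- letters5, b <- letters5].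

Lemma mem_pairs5 p : p \in pairs5.
Proof. by case: p => a b; apply: allpairs_f; apply: mem_letters5. Qed.

Lemma C5_colorP : marked_inj_coloring C5 (fun _ _ => true) C5_color.
Proof. by apply: (marked_inj_coloringP mem_letters5); reflexivity. Qed.

Lemma last2_colorP :
  marked_inj_coloring (last2_graph C5) (fun p q => p.1 == q.1) last2_color.
Proof. by apply: (marked_inj_coloringP mem_pairs5); reflexivity. Qed.

Lemma C5_not_inj_2colorable : ~ inj_edge_colorable C5 2.
Proof.
move/(inj_edge_colorable_extendable (edges_in C5 letters5)); apply/negP.
reflexivity.
Qed.

Lemma sierp2_C5_not_inj_3colorable : ~ inj_edge_colorable (sierp2 C5) 3.
Proof.
move/(inj_edge_colorable_extendable (edges_in (sierp2 C5) pairs5)); apply/negP.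
reflexivity.
Qed.

Lemma sierp1_C5_inj_chromatic_index : inj_chromatic_index_is (sierp_adj C5 1) 3.
Proof.
apply: inj_chromatic_index_isS.
  apply: (inj_edge_colorable_marked_pullback (f := fun w : {ffun 'I_1 -> 'I_5} => w ord0)
            _ _ C5_colorP) => [u v|x _ z _ _ nxz]; first by rewrite sierp_adj1.
  by rewrite andbT; apply: contra nxz => /eqP Exz; apply/eqP/ffunP => i; rewrite (ord1 i).
apply: contra_not C5_not_inj_2colorable.
apply: (inj_edge_colorable_hom (f := fun a : 'I_5 => [ffun _ : 'I_1 => a])) => [a b|a b].
  by move/ffunP/(_ ord0); rewrite !ffunE.
by rewrite sierp_adj1 !ffunE.
Qed.

Lemma sierp_C5_inj_chromatic_index m : inj_chromatic_index_is (sierp_adj C5 m.+2) 4.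
Proof.
apply: inj_chromatic_index_isS.
  apply: (inj_edge_colorable_marked_pullback (f := @last2 _ m) _ _ last2_colorP).
    move=> x y; apply: last2_hom C5_sym _ _ _.
  exact: last2_path C5_sym C5_irr m.
apply: contra_not sierp2_C5_not_inj_3colorable.
apply: (inj_edge_colorable_hom (f := pad m ord0)); first exact: can_inj (@last2_pad _ m ord0).
exact: pad_hom m ord0.
Qed.

Theorem mainTheorem8 :
  inj_chromatic_index_is (sierp_adj C5 1) 3 /\
  (forall n : nat, 2 <= n -> inj_chromatic_index_is (sierp_adj C5 n) 4).
Proof.
split; first exact: sierp1_C5_inj_chromatic_index.
by case=> [|[|m]] // _; apply: sierp_C5_inj_chromatic_index.
Qed.
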